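(* For every trie $\mathcal T$ with $n$ nodes over an alphabet of size $\sigma$ and every integer $k\ge0$, the number $r$ of XBWT runs of $\mathcal T$ satisfies $r\le n\mathcal H_k(\mathcal T)+\sigma^{k+1}$.
   Context: A trie over a finite totally ordered alphabet $\Sigma$ is a rooted ordered tree with edges labeled by symbols of $\Sigma$ such that edges leaving the same node have distinct labels and siblings are ordered by their incoming labels. For node $u$: $out(u)$ is the set of labels of edges leaving $u$; $\lambda(u)$ is the label of the edge entering $u$, with $\lambda(\text{root})=\#\notin\Sigma$; $\pi(u)$ the parent, $\pi(\text{root})=\text{root}$; $\lambda_0(u)=\epsilon$, $\lambda_k(u)=\lambda_{k-1}(\pi(u))\cdot\lambda(u)$; $n_w=|\{u:\lambda_k(u)=w\}|$, $n_{w,c}=|\{u:\lambda_k(u)=w,\ c\in out(u)\}|$. Logs base 2, $0\log(x/0)=0$. $\mathcal H_k(\mathcal T)=\sum_{w}\sum_{c\in\Sigma}\left[\frac{n_{w,c}}{n}\log\frac{n_w}{n_{w,c}}+\frac{n_w-n_{w,c}}{n}\log\frac{n_w}{n_w-n_{w,c}}\right]$ over contexts $w$ with $n_w>0$. Let $u_1,\dots,u_n$ be the nodes sorted co-lexicographically (right-to-left comparison, $\epsilon$ smallest) by the root-to-node path label. An index $i\in[n]$ is a $c$-run break if $c\in out(u_i)$ and either $i=n$ or $c\notin out(u_{i+1})$; $r=\sum_{c\in\Sigma}r_c$ where $r_c$ is the number of $c$-run breaks. *)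

From mathcomp Require Import all_boot all_order all_algebra.
From mathcomp Require Import reals exp.
Set Implicit Arguments. Unset Strict Implicit. Unset Printing Implicit Defensive.
Import Order.TTheory GRing.Theory Num.Theory.

Section Trie.
Variable sigma : nat.
Local Notation word := (seq 'I_sigma).

(* A trie is represented by the duplicate-free list of its nodes, each node
   identified with its root-to-node path label (a word over Sigma).  Children of a node have
   distinct labels automatically, and siblings are ordered by labels. *)
Definition is_trie (T : seq word) : bool :=
  [&& [::] \in T, uniq T &
      all (fun u => (u == [::]) || (take (size u).-1 u \in T)) T].

Definition in_out (T : seq word) (u : word) (c : 'I_sigma) : bool :=
  rcons u c \in T.

(* lambda_k(u): the last k labels on the path to u, padded with # (None)
   at the root, since lambda(root) = # and pi(root) = root. *)
Definition ctx (k : nat) (u : word) : seq (option 'I_sigma) :=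
  drop (size u) (nseq k None ++ map Some u).

Definition n_ctx (T : seq word) k w : nat := count (fun u => ctx k u == w) T.
Definition n_ctx_c (T : seq word) k w c : nat :=
  count (fun u => (ctx k u == w) && in_out T u c) T.

Fixpoint lexle (s t : seq nat) : bool :=
  match s, t with
  | [::], _ => true
  | _ :: _, [::] => false
  | x :: s', y :: t' => (x < y) || ((x == y) && lexle s' t')
  end.

Definition colex_le (u v : word) : bool :=
  lexle (rev (map val u)) (rev (map val v)).

Definition colex_nodes (T : seq word) : seq word := sort colex_le T.

Definition run_break (T : seq word) (c : 'I_sigma) (i : nat) : bool :=
  let s := colex_nodes T in
  in_out T (nth [::] s i) c &&
  ((i.+1 == size T) || ~~ in_out T (nth [::] s i.+1) c).

Definition xbwt_runs (T : seq word) : nat :=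
  \sum_(c < sigma) \sum_(i < size T) run_break T c i.

Definition log2 {R : realType} (x : R) : R := ln x / ln 2.

Local Open Scope ring_scope.

(* a/n * log(b/a), with the convention 0 log(x/0) = 0 *)
Definition xlog {R : realType} (n a b : nat) : R :=
  if a == 0%N then 0 else a%:R / n%:R * log2 (b%:R / a%:R).

(* k-th order empirical entropy H_k(T); the sum ranges over the contexts w
   with n_w > 0, i.e. those occurring as lambda_k(u) for some node u. *)
Definition Hk {R : realType} (T : seq word) (k : nat) : R :=
  \sum_(w <- undup [seq ctx k u | u <- T])
    \sum_(c < sigma)
      (xlog (size T) (n_ctx_c T k w c) (n_ctx T k w) +
       xlog (size T) (n_ctx T k w - n_ctx_c T k w c) (n_ctx T k w)).

End Trie.

(* Sort the nodes co-lexicographically.  Nodes with the same context lambda_k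
   then form a contiguous block, because contexts are suffixes of the path
   labels, so the c-run breaks can be counted block by block.  In a block
   with b nodes, a of which have a c-child, there are at most min(a, b-a+1)
   breaks, and for 0 < a < b this is at most
   a log(b/a) + (b-a) log(b/(b-a)), the contribution of (w, c) to n H_k.
   The remaining breaks lie in c-full blocks (a = b).  Such a break ends its
   block and is followed either by the end of the list or by a block that is
   not c-full, so for each c there are at most (#contexts + 1) / 2 <= sigma^k
   of them when sigma >= 2; for sigma <= 1 the trie is a path and there is at
   most one break per letter. *)

From mathcomp Require Import all_boot all_order all_algebra.
From mathcomp Require Import reals exp.
From mathcomp Require Import lra zify.
Import Order.TTheory GRing.Theory Num.Theory.
Set Implicit Arguments. Unset Strict Implicit. Unset Printing Implicit Defensive.

Section EntropyBounds.
Local Open Scope ring_scope.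
Variable R : realType.

Lemma bernoulli_inequality (x : R) (m : nat) : 0 <= x -> 1 + m%:R * x <= (1 + x) ^+ m.
Proof.
move=> x_ge0; elim: m => [|m IHm]; first by rewrite mul0r addr0 expr0.
have mxx_ge0 : 0 <= m%:R * x * x by rewrite !mulr_ge0.
rewrite exprS -natr1; apply: le_trans (ler_wpM2l _ IHm); nra.
Qed.

Lemma ln2_gt0 : 0 < ln (2 : R).
Proof. by rewrite ln_gt0 // ltr1n. Qed.

Lemma ln2_le_mul_ln_ratio (t s : nat) : (0 < t)%N -> (0 < s)%N ->
  ln 2 <= t%:R * ln ((t + s)%:R / t%:R) :> R.
Proof.
move=> t_gt0 s_gt0; have tR_gt0 : 0 < t%:R :> R by rewrite ltr0n.
have ratio_ge : 1 + t%:R^-1 <= (t + s)%:R / t%:R :> R.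
  rewrite natrD mulrDl divff ?gt_eqF // lerD2l -[X in X <= _]mul1r.
  by apply: ler_wpM2r; rewrite ?invr_ge0 ?(ltW tR_gt0) ?ler1n.
have inv_ge0 : 0 <= t%:R^-1 :> R by rewrite invr_ge0 ltW.
have ratio_gt0 : 0 < (t + s)%:R / t%:R :> R by apply: lt_le_trans ratio_ge; lra.
rewrite mulr_natl -lnXn // ler_ln ?posrE ?exprn_gt0 //.
have -> : 2 = 1 + t%:R * t%:R^-1 :> R by rewrite divff ?gt_eqF.
apply: le_trans (bernoulli_inequality t inv_ge0) (lerXn2r _ _ _ ratio_ge) => //.
- by rewrite nnegrE; lra.
- by rewrite nnegrE ltW.
Qed.

Lemma mul_ln2_le_mul_ln_ratio (t s : nat) : (0 < t)%N -> (t <= s)%N ->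
  t%:R * ln 2 <= t%:R * ln ((t + s)%:R / t%:R) :> R.
Proof.
move=> t_gt0 t_le_s; have tR_gt0 : 0 < t%:R :> R by rewrite ltr0n.
apply: ler_wpM2l; first exact: ltW.
rewrite ler_ln ?posrE ?divr_gt0 ?ltr0n ?addn_gt0 ?t_gt0 //.
by rewrite ler_pdivlMr // -natrM ler_nat; lia.
Qed.

Lemma entropy_ge_succ_mul_ln2 (t s : nat) : (0 < t)%N -> (t <= s)%N ->
  t.+1%:R * ln 2 <= t%:R * ln ((t + s)%:R / t%:R) + s%:R * ln ((t + s)%:R / s%:R) :> R.
Proof.
move=> t_gt0 t_le_s; have s_gt0 : (0 < s)%N by apply: leq_trans t_le_s.
rewrite -natr1 mulrDl mul1r addnC lerD ?mul_ln2_le_mul_ln_ratio //; last first.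
  exact: ln2_le_mul_ln_ratio.
by rewrite addnC mul_ln2_le_mul_ln_ratio.
Qed.

Lemma runs_le_binary_entropy (a d r : nat) : (0 < a)%N -> (0 < d)%N ->
  (r <= a)%N -> (r <= d.+1)%N ->
  r%:R <= a%:R * log2 ((a + d)%:R / a%:R) + d%:R * log2 ((a + d)%:R / d%:R) :> R.
Proof.
move=> a_gt0 d_gt0 r_le_a r_le_d1.
rewrite /log2 !mulrA -mulrDl ler_pdivlMr ?ln2_gt0 //.
have [a_le_d|d_lt_a] := leqP a d.
  apply: le_trans (entropy_ge_succ_mul_ln2 a_gt0 a_le_d).
  by apply: ler_wpM2r; rewrite ?(ltW ln2_gt0) // ler_nat leqW.
rewrite addrC addnC; apply: le_trans (entropy_ge_succ_mul_ln2 d_gt0 (ltnW d_lt_a)).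
by apply: ler_wpM2r; rewrite ?(ltW ln2_gt0) // ler_nat.
Qed.

Lemma xlog_ge0 (n a b : nat) : (a <= b)%N -> 0 <= xlog n a b :> R.
Proof.
move=> a_le_b; rewrite /xlog; case: eqP => // /eqP a_neq0.
have aR_gt0 : 0 < a%:R :> R by rewrite ltr0n lt0n.
apply: mulr_ge0; first exact: divr_ge0.
by rewrite /log2 divr_ge0 ?(ltW ln2_gt0) // ln_ge0 // ler_pdivlMr // mul1r ler_nat.
Qed.

Lemma mulr_xlog (n a b : nat) : (0 < n)%N ->
  n%:R * xlog n a b = a%:R * log2 (b%:R / a%:R) :> R.
Proof.
move=> n_gt0; rewrite /xlog; case: eqP => [->|_]; first by rewrite mulr0 mul0r.
by rewrite mulrA (mulrCA n%:R) divff ?mulr1 // pnatr_eq0 -lt0n.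
Qed.

Lemma runs_le_entropy_term (n a b r : nat) : (0 < n)%N -> (a <= b)%N ->
  (r <= a)%N -> (r <= b - a + 1)%N ->
  r%:R <= n%:R * (xlog n a b + xlog n (b - a)%N b) + ((a == b) * r)%:R :> R.
Proof.
move=> n_gt0 a_le_b r_le_a r_le_ba.
have term_ge0 : 0 <= n%:R * (xlog n a b + xlog n (b - a)%N b) :> R.
  by rewrite mulr_ge0 ?addr_ge0 ?xlog_ge0 ?leq_subr.
have [_|a_neq_b] := eqVneq a b; first by rewrite mul1n lerDr.
rewrite mul0n addr0; have [->|r_gt0] := posnP r; first exact: term_ge0.
have a_gt0 : (0 < a)%N by apply: leq_trans r_le_a.
have d_gt0 : (0 < b - a)%N by rewrite subn_gt0 ltn_neqAle a_neq_b.
rewrite mulrDr !mulr_xlog //.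
move: (b - a)%N d_gt0 r_le_ba (subnKC a_le_b) => d d_gt0 r_le_d1 <-.
by apply: runs_le_binary_entropy; rewrite // -addn1.
Qed.
End EntropyBounds.

Lemma lexleE (s t : seq nat) : lexle s t = (s <= t :> seqlexi nat)%O.
Proof.
elim: s t => [|x s IHs] [|y t] //=; rewrite lexi_cons IHs leEnat.
by case: ltngtP.
Qed.

Lemma lexi_take_between disp (T : porderType disp) k (x y z : seqlexi T) :
  (x <= y)%O -> (y <= z)%O -> k <= size x -> k <= size z -> take k x = take k z ->
  k <= size y /\ take k y = take k x.
Proof.
elim: k x y z => [|k IHk] [|a x] [|b y] [|c z] //=.
rewrite !lexi_cons => /andP[ab /implyP ba_xy] /andP[bc /implyP cb_yz] kx kz [ac txz].
have eq_ab : a = b by apply/le_anti; rewrite ab ac bc.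
move: ba_xy cb_yz; rewrite -eq_ab -ac lexx => /(_ isT) xy /(_ isT) yz.
by have [ky <-] := IHk x y z xy yz kx kz txz.
Qed.

Section Contexts.
Variable sigma : nat.
Local Notation word := (seq 'I_sigma).

Lemma colex_leE (u v : word) :
  colex_le u v = (rev (map val u) <= rev (map val v) :> seqlexi nat)%O.
Proof. exact: lexleE. Qed.

Lemma colex_le_trans : transitive (@colex_le sigma).
Proof. by move=> v u w; rewrite !colex_leE; apply: le_trans. Qed.

Lemma colex_le_total : total (@colex_le sigma).
Proof. by move=> u v; rewrite !colex_leE le_total. Qed.

Lemma colex_le_anti (u v : word) : colex_le u v -> colex_le v u -> u = v.
Proof.
rewrite !colex_leE => uv vu; have /(congr1 rev) := le_anti (introT andP (conj uv vu)).
by rewrite !revK => /(inj_map val_inj).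
Qed.

Lemma colex_le_refl : reflexive (@colex_le sigma).
Proof. by move=> u; rewrite colex_leE. Qed.

Lemma ctx_long k (u : word) : k <= size u -> ctx k u = map Some (drop (size u - k) u).
Proof.
move=> k_le_u; rewrite /ctx drop_cat size_nseq ltnNge k_le_u /= map_drop.
by congr drop; lia.
Qed.

Lemma ctx_suffix k (u : word) : ctx k u = ctx k (drop (size u - k) u).
Proof.
have [k_le_u|u_lt_k] := leqP k (size u); last by rewrite (eqP (ltnW u_lt_k)) drop0.
rewrite ctx_long // ctx_long size_drop; last lia.
by rewrite (_ : size u - (size u - k) - k = 0) ?drop0 //; lia.
Qed.

Lemma pmap_ctx k (u : word) : pmap id (ctx k u) = drop (size u - k) u.
Proof.
have pmap_Some (v : word) : pmap id (map Some v) = v by elim: v => //= a v ->.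
have [k_le_u|u_lt_k] := leqP k (size u); first by rewrite ctx_long.
rewrite /ctx drop_cat size_nseq u_lt_k pmap_cat drop_nseq pmap_Some.
by rewrite (eqP (ltnW u_lt_k)) drop0; elim: (k - size u).
Qed.

Lemma eq_ctx k (u v : word) : ctx k u = ctx k v ->
  u = v \/ [/\ k <= size u, k <= size v & drop (size u - k) u = drop (size v - k) v].
Proof.
move=> /(congr1 (pmap id)); rewrite !pmap_ctx => eq_suffix.
have := congr1 size eq_suffix; rewrite !size_drop => eq_size.
have [k_le_u|u_lt_k] := leqP k (size u); have [k_le_v|v_lt_k] := leqP k (size v).
- by right.
- lia.
- lia.
- by left; move: eq_suffix; rewrite (eqP (ltnW u_lt_k)) (eqP (ltnW v_lt_k)) !drop0.
Qed.

Lemma colex_ctx_between k (u v w : word) : colex_le u v -> colex_le v w ->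
  ctx k u = ctx k w -> ctx k v = ctx k u.
Proof.
move=> uv vw /eq_ctx[eq_uw|[k_le_u k_le_w eq_suffix]].
  by move: vw; rewrite -eq_uw => vu; rewrite (colex_le_anti uv vu).
move: uv vw; rewrite !colex_leE => uv vw.
have := lexi_take_between (k := k) uv vw; rewrite !size_rev !size_map !take_rev !size_map.
rewrite -!map_drop eq_suffix => /(_ k_le_u k_le_w erefl) [k_le_v].
move=> /(congr1 rev); rewrite !revK => /(inj_map val_inj) eq_suffix_v.
by rewrite (ctx_long k_le_u) (ctx_long k_le_v) eq_suffix_v eq_suffix.
Qed.

Lemma size_contexts k (T : seq word) :
  size (undup [seq ctx k u | u <- T]) <= \sum_(d < k.+1) sigma ^ d.
Proof.
pose short_ctxs := flatten [seq [seq ctx k (tval t) | t <- enum {: d.-tuple 'I_sigma}]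
                           | d <- iota 0 k.+1].
have -> : \sum_(d < k.+1) sigma ^ d = size short_ctxs.
  rewrite size_flatten /shape -map_comp sumnE big_map -(big_mkord xpredT (expn sigma)).
  by apply: eq_bigr => d _; rewrite /= size_map -cardT card_tuple card_ord.
apply: uniq_leq_size; first exact: undup_uniq.
move=> w; rewrite mem_undup => /mapP[u _ ->]; rewrite ctx_suffix.
have suffix_le_k : size (drop (size u - k) u) <= k.
  by rewrite size_drop; move: (size u) => m; lia.
apply/flatten_mapP; exists (size (drop (size u - k) u)); first by rewrite mem_iota; lia.
by apply/mapP; exists (Tuple (eqxx (size (drop (size u - k) u)))); rewrite ?mem_enum.
Qed.

End Contexts.
Lemma sum_le_count_inj (X : eqType) n (Q : nat -> bool) (f : nat -> X)
    (A : pred X) (s : seq X) :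
  (forall i, i < n -> Q i -> f i \in filter A s) ->
  (forall i j, i < j -> j < n -> Q i -> Q j -> f i != f j) ->
  \sum_(i < n) Q i <= count A s.
Proof.
move=> f_in f_inj; rewrite -size_filter.
have -> : \sum_(i < n) Q i = size [seq f i | i <- iota 0 n & Q i].
  rewrite size_map size_filter -sumn_count sumnE big_map.
  rewrite -(big_mkord xpredT (fun i => nat_of_bool (Q i))).
  by rewrite /index_iota subn0.
apply: uniq_leq_size.
  rewrite map_inj_in_uniq ?filter_uniq ?iota_uniq // => i j.
  rewrite !mem_filter !mem_iota /= => /andP[Qi i_lt] /andP[Qj j_lt] fij.
  case: (ltngtP i j) => [ij|ji|//].
  - by move: (f_inj i j ij j_lt Qi Qj); rewrite fij eqxx.
  - by move: (f_inj j i ji i_lt Qj Qi); rewrite fij eqxx.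
move=> _ /mapP[i + ->]; rewrite [i \in _]mem_filter mem_iota => /andP[Qi /andP[_ i_lt]].
exact: f_in.
Qed.

Lemma sum_le1 n (Q : nat -> bool) :
  (forall i j, i < j -> j < n -> Q i -> Q j -> False) -> \sum_(i < n) Q i <= 1.
Proof.
move=> Q_unique; apply: (@sum_le_count_inj _ n Q (fun=> tt) predT [:: tt]) => //.
by move=> i j ij jn Qi Qj; case: (Q_unique i j ij jn Qi Qj).
Qed.

Lemma sum_shift n (F : nat -> nat) : \sum_(i < n) (i.+1 < n) * F i.+1 <= \sum_(i < n) F i.
Proof.
case: n => [|n]; first by rewrite !big_ord0.
rewrite big_ord_recr big_ord_recl /= ltnn mul0n addn0.
rewrite (eq_bigr (fun i : 'I_n => F i.+1)) ?leq_addl // => i _.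
by rewrite ltnS ltn_ord mul1n.
Qed.

Lemma sum_last n (Q : nat -> bool) : \sum_(i < n) ((i.+1 == n) && Q i) <= Q n.-1.
Proof.
case: n => [|n]; first by rewrite big_ord0.
rewrite big_ord_recr /= eqxx big1 // => i _.
by rewrite eqSS ltn_eqF.
Qed.

Lemma sum_expn_add1_le m j : 2 <= m -> \sum_(d < j.+1) m ^ d + 1 <= 2 * m ^ j.
Proof.
move=> m_ge2; elim: j => [|j IHj]; first by rewrite big_ord_recr big_ord0 expn0.
rewrite big_ord_recr /= expnS.
have : 2 * m ^ j <= m * m ^ j by rewrite leq_mul2r m_ge2 orbT.
by move: IHj; move: (\sum_(i < j.+1) m ^ i) (m * m ^ j) (m ^ j) => S Z Y; lia.
Qed.

Section Tries.
Variable sigma : nat.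
Local Notation word := (seq 'I_sigma).

Section Trie.
Variable T : seq word.
Hypothesis T_trie : is_trie T.

Lemma trie_size_gt0 : 0 < size T.
Proof. by case/and3P: T_trie; case: (T). Qed.

Lemma trie_take j (u : word) : u \in T -> take j u \in T.
Proof.
case/and3P: T_trie => root_in _ /allP parent_in.
elim: (size u) {-2}u (erefl (size u)) j => [|m IHm] v v_size j v_in.
  by move/size0nil: v_size => ->.
have [v_le_j|j_lt_v] := leqP (size v) j; first by rewrite take_oversize.
case/orP: (parent_in _ v_in) => [/eqP v0|]; first by rewrite v0 in v_size.
rewrite v_size /= => parent_v_in.
rewrite (_ : take j v = take j (take m v)); last by rewrite -take_min; congr take; lia.
by apply: IHm => //; rewrite size_take_min v_size; lia.
Qed.
End Trie.

Section UnaryAlphabet.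
Hypothesis sigma_le1 : sigma <= 1.

Lemma unary_map_val (u : word) : map val u = nseq (size u) 0.
Proof. by elim: u => //= x u ->; congr (_ :: _); have := ltn_ord x; lia. Qed.

Lemma unary_word_eq (u v : word) : size u = size v -> u = v.
Proof. by move=> eq_size; apply: (inj_map val_inj); rewrite !unary_map_val eq_size. Qed.

Lemma unary_colex_le (u v : word) : colex_le u v = (size u <= size v).
Proof.
rewrite /colex_le !unary_map_val !rev_nseq.
by elim: (size u) (size v) => [|a IHa] [|b] //=; rewrite ltnn eqxx IHa.
Qed.

Lemma unary_trie_leaf_unique (T : seq word) c (u v : word) : is_trie T ->
  u \in T -> v \in T -> ~~ in_out T u c -> ~~ in_out T v c -> u = v.
Proof.
move=> T_trie u_in v_in u_leaf v_leaf.
have no_longer_node (x y : word) : y \in T -> ~~ in_out T x c -> size x < size y -> False.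
  move=> y_in x_leaf x_lt_y; move: x_leaf; rewrite /in_out.
  rewrite -(@unary_word_eq (take (size x).+1 y) (rcons x c)) ?trie_take //.
  by rewrite size_take_min size_rcons; lia.
case: (ltngtP (size u) (size v)) => [uv|vu|]; last exact: unary_word_eq.
- by case: (no_longer_node u v).
- by case: (no_longer_node v u).
Qed.
End UnaryAlphabet.
End Tries.

Section ColexBlocks.
Variables (sigma : nat) (T : seq (seq 'I_sigma)) (k : nat).

Definition contexts := undup [seq ctx k u | u <- T].

Let n := size T.
Let node i := nth [::] (colex_nodes T) i.
Let cx i := ctx k (node i).
Let out i c := in_out T (node i) c.

Definition full_context w c := n_ctx_c T k w c == n_ctx T k w.
Definition block_breaks w c := \sum_(i < n) (cx i == w) * run_break T c i.
Definition full_breaks c := \sum_(i < n) full_context (cx i) c && run_break T c i.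

Lemma size_colex_nodes : size (colex_nodes T) = n.
Proof. exact: size_sort. Qed.

Lemma node_in i : i < n -> node i \in T.
Proof. by move=> i_lt; rewrite -(mem_sort (@colex_le sigma)) mem_nth ?size_colex_nodes. Qed.

Lemma cx_in i : i < n -> cx i \in contexts.
Proof. by move=> i_lt; rewrite mem_undup; apply: map_f; apply: node_in. Qed.

Lemma cx_between i j l : i < j -> j < l -> l < n -> cx i = cx l -> cx j = cx i.
Proof.
move=> ij jl l_lt; have sorted_nodes := sort_sorted (@colex_le_total sigma) T.
have colex_nth := sorted_ltn_nth (@colex_le_trans sigma) [::] sorted_nodes.
by apply: colex_ctx_between; apply: colex_nth; rewrite ?inE ?size_colex_nodes //; lia.
Qed.

Let block_end i := (i.+1 == n) || (cx i.+1 != cx i).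

Lemma block_end_unique i j : i < j -> j < n -> block_end i -> cx j != cx i.
Proof.
move=> ij j_lt /orP[/eqP|next_neq]; first lia.
apply/eqP => eq_ji; case: (ltngtP i.+1 j) => [i1j|ji1|eq_i1j]; first 2 last.
- by move: next_neq; rewrite eq_i1j eq_ji eqxx.
- by move: next_neq; rewrite (cx_between (ltnSn i) i1j j_lt (esym eq_ji)) eqxx.
- lia.
Qed.

Lemma block_start_unique i j : i < j -> j.+1 < n -> cx j.+1 != cx j -> cx i.+1 != cx j.+1.
Proof.
move=> ij j1_lt next_neq_j; apply/eqP => eq_next.
case: (ltngtP i.+1 j) => [i1j|ji1|eq_i1j].
- by move: next_neq_j; rewrite (cx_between i1j (ltnSn j) j1_lt eq_next) eq_next eqxx.
- lia.
- by move: next_neq_j; rewrite -eq_next eq_i1j eqxx.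
Qed.

Lemma run_breakE c i : run_break T c i = out i c && ((i.+1 == n) || ~~ out i.+1 c).
Proof. by []. Qed.

Lemma count_nodes (p : pred (seq 'I_sigma)) : count p T = \sum_(i < n) p (node i).
Proof.
rewrite -(count_sort (@colex_le sigma)) -sum1_count (big_nth [::]) size_colex_nodes.
by rewrite big_mkord big_mkcond; apply: eq_bigr => i _; rewrite /node; case: (p _).
Qed.

Lemma sum_by_context (f : nat -> nat) :
  \sum_(i < n) f i = \sum_(w <- contexts) \sum_(i < n) (cx i == w) * f i.
Proof.
rewrite exchange_big /=; apply: eq_bigr => i _.
rewrite (bigD1_seq (cx i)) ?cx_in ?undup_uniq //= eqxx mul1n big1_seq ?addn0 //.
by move=> w /andP[w_neq _]; rewrite eq_sym (negbTE w_neq).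
Qed.

Lemma xbwt_runs_by_context :
  xbwt_runs T = \sum_(c < sigma) \sum_(w <- contexts) block_breaks w c.
Proof. by apply: eq_bigr => c _; exact: (sum_by_context (fun i => run_break T c i)). Qed.

Lemma n_ctx_cE w c : n_ctx_c T k w c = \sum_(i < n) (cx i == w) && out i c.
Proof. exact: count_nodes. Qed.

Lemma n_ctxE w : n_ctx T k w = \sum_(i < n) (cx i == w).
Proof. exact: count_nodes. Qed.

Lemma n_ctx_split w c :
  n_ctx T k w = n_ctx_c T k w c + \sum_(i < n) (cx i == w) && ~~ out i c.
Proof.
rewrite n_ctxE n_ctx_cE -big_split /=; apply: eq_bigr => i _.
by case: (cx i == w); case: (out i c).
Qed.

Lemma n_ctx_c_le w c : n_ctx_c T k w c <= n_ctx T k w.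
Proof. by rewrite (n_ctx_split w c) leq_addr. Qed.

Lemma full_context_out w c i : full_context w c -> i < n -> cx i = w -> out i c.
Proof.
move=> /eqP full i_lt cx_i; move: (n_ctx_split w c).
rewrite -full -{1}[n_ctx_c _ _ _ _]addn0 => /eqP; rewrite eqn_add2l eq_sym sum_nat_eq0.
by move=> /forallP /(_ (Ordinal i_lt)) /=; rewrite cx_i eqxx /=; case: (out i c).
Qed.

Lemma block_breaks_le_n_ctx_c w c : block_breaks w c <= n_ctx_c T k w c.
Proof.
rewrite n_ctx_cE; apply: leq_sum => i _; rewrite run_breakE.
by case: (cx i == w); case: (out i c); case: (_ || _).
Qed.

(* Every break of block w but its last is followed by a node of w without a
   c-child. *)
Lemma block_breaks_le_nonout w c :
  block_breaks w c <= n_ctx T k w - n_ctx_c T k w c + 1.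
Proof.
rewrite (n_ctx_split w c) addKn.
apply: (@leq_trans (\sum_(i < n) (i.+1 < n) * ((cx i.+1 == w) && ~~ out i.+1 c)
                    + \sum_(i < n) ((cx i == w) && block_end i))).
  rewrite -big_split; apply: leq_sum => i _; rewrite run_breakE.
  rewrite /block_end ltn_neqAle ltn_ord andbT.
  have [<-|] := eqVneq (cx i) w; last by rewrite mul0n.
  by case: (out i c); case: (i.+1 == n); case: (out i.+1 c); case: (cx i.+1 == cx i).
apply: leq_add; first exact: (sum_shift n (fun j => (cx j == w) && ~~ out j c)).
apply: (@sum_le1 n (fun i => (cx i == w) && block_end i)).
move=> i j ij j_lt /andP[/eqP cx_i end_i] /andP[/eqP cx_j _].
by move: (block_end_unique ij j_lt end_i); rewrite cx_i cx_j eqxx.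
Qed.

Lemma full_breaks_by_context c :
  full_breaks c = \sum_(w <- contexts) full_context w c * block_breaks w c.
Proof.
rewrite /full_breaks (sum_by_context (fun i => full_context (cx i) c && run_break T c i)).
apply: eq_bigr => w _; rewrite /block_breaks big_distrr /=; apply: eq_bigr => i _.
have [->|] := eqVneq (cx i) w; last by rewrite muln0.
by rewrite mul1n; case: full_context; case: run_break.
Qed.

Lemma break_next_nonfull i c : i.+1 < n -> run_break T c i -> ~~ full_context (cx i.+1) c.
Proof.
move=> i1_lt; rewrite run_breakE (ltn_eqF i1_lt) /= => /andP[_ no_out].
by apply: contra no_out => full; apply: full_context_out full i1_lt erefl.
Qed.

Lemma full_break_block_end i c :
  i < n -> full_context (cx i) c -> run_break T c i -> block_end i.
Proof.
move=> i_lt full brk; rewrite /block_end; have [i1_lt|i1_ge] := ltnP i.+1 n; last first.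
  by rewrite (_ : i.+1 == n) //; lia.
apply/orP; right; apply/eqP => eq_next.
by move: (break_next_nonfull i1_lt brk); rewrite eq_next full.
Qed.

Lemma full_breaks_le_full c : full_breaks c <= count (full_context^~ c) contexts.
Proof.
apply: (@sum_le_count_inj _ n (fun i => full_context (cx i) c && run_break T c i) cx).
  by move=> i i_lt /andP[full _]; rewrite mem_filter full cx_in.
move=> i j ij j_lt /andP[full_i brk_i] _; rewrite eq_sym.
exact: block_end_unique ij j_lt (full_break_block_end (ltn_trans ij j_lt) full_i brk_i).
Qed.

Lemma full_breaks_le_nonfull c :
  full_breaks c <= count (predC (full_context^~ c)) contexts + out n.-1 c.
Proof.
have next_neq l : l.+1 < n -> full_context (cx l) c -> run_break T c l -> cx l.+1 != cx l.
  move=> l1_lt full brk; move: (full_break_block_end (ltnW l1_lt) full brk).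
  by rewrite /block_end ltn_eqF.
apply: (@leq_trans (\sum_(i < n) ((full_context (cx i) c && run_break T c i) && (i.+1 < n))
                    + \sum_(i < n) ((i.+1 == n) && out i c))).
  rewrite -big_split; apply: leq_sum => i _; rewrite ltn_neqAle ltn_ord andbT run_breakE.
  by case: full_context; case: (out i c); case: (i.+1 == n); case: (out i.+1 c).
apply: leq_add; last exact: (sum_last n (fun i => out i c)).
apply: (@sum_le_count_inj _ n
  (fun i => (full_context (cx i) c && run_break T c i) && (i.+1 < n)) (fun i => cx i.+1)).
  by move=> i i_lt /andP[/andP[_ brk] i1_lt]; rewrite mem_filter /= break_next_nonfull ?cx_in.
move=> i j ij _ _ /andP[/andP[full_j brk_j] j1_lt].
exact: block_start_unique ij j1_lt (next_neq j j1_lt full_j brk_j).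
Qed.

Lemma double_full_breaks_le c : 2 * full_breaks c <= size contexts + 1.
Proof.
have := full_breaks_le_full c; have := full_breaks_le_nonfull c.
have := count_predC (full_context^~ c) contexts; have : out n.-1 c <= 1 by case: (out _ _).
lia.
Qed.

Section UnaryBreaks.
Hypotheses (sigma_le1 : sigma <= 1) (T_trie : is_trie T).

Lemma unary_last_node_no_out c : ~~ out n.-1 c.
Proof.
rewrite /out /in_out -(mem_sort (@colex_le sigma)); apply/negP => /(nthP [::])[j].
rewrite size_colex_nodes => j_lt node_j; have n_gt0 := trie_size_gt0 T_trie.
have : colex_le (node j) (node n.-1).
  apply: (sorted_leq_nth (@colex_le_trans sigma) (@colex_le_refl sigma)).
  - exact: sort_sorted (@colex_le_total sigma) T.
  - by rewrite inE size_colex_nodes.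
  - by rewrite inE size_colex_nodes prednK.
  - by rewrite -ltnS prednK.
by rewrite /node node_j unary_colex_le // size_rcons ltnn.
Qed.

Lemma unary_runs_le1 c : \sum_(i < n) run_break T c i <= 1.
Proof.
have break_next_leaf i : i < n -> run_break T c i -> i.+1 < n /\ ~~ out i.+1 c.
  move=> i_lt; rewrite run_breakE => /andP[out_i]; have [i1_eq|i1_neq] := eqVneq i.+1 n.
    by move: out_i; rewrite (_ : i = n.-1) ?(negbTE (unary_last_node_no_out c)) // -i1_eq.
  by split; [rewrite ltn_neqAle i1_neq | ].
apply: (@sum_le1 n (fun i => run_break T c i)) => i j ij j_lt brk_i brk_j.
have [i1_lt leaf_i] := break_next_leaf i (ltn_trans ij j_lt) brk_i.
have [j1_lt leaf_j] := break_next_leaf j j_lt brk_j.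
move: (unary_trie_leaf_unique sigma_le1 T_trie (node_in i1_lt) (node_in j1_lt) leaf_i leaf_j).
move/eqP; rewrite /node nth_uniq ?size_colex_nodes ?sort_uniq //; last by case/and3P: T_trie.
by move/eqP => [eq_ij]; rewrite eq_ij ltnn in ij.
Qed.
End UnaryBreaks.

Lemma sum_full_breaks_le : is_trie T -> \sum_(c < sigma) full_breaks c <= sigma ^ k.+1.
Proof.
move=> T_trie; have [sigma_le1|sigma_ge2] := leqP sigma 1.
  apply: (@leq_trans (\sum_(c < sigma) 1)).
    apply: leq_sum => c _; apply: leq_trans (unary_runs_le1 sigma_le1 T_trie c).
    by apply: leq_sum => i _; case: full_context.
  rewrite sum_nat_const card_ord muln1.
  by case: (sigma) sigma_le1 => [|[|]] // _; rewrite exp1n.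
apply: (@leq_trans (\sum_(c < sigma) sigma ^ k)); last by rewrite sum_nat_const card_ord expnS.
apply: leq_sum => c _; have := double_full_breaks_le c; have := size_contexts k T.
have := sum_expn_add1_le k sigma_ge2; rewrite /contexts; lia.
Qed.
End ColexBlocks.

Local Open Scope ring_scope.

Theorem corollary6 (R : realType) (sigma : nat) (T : seq (seq 'I_sigma)) (k : nat) :
  is_trie T ->
  ((xbwt_runs T)%:R : R) <= (size T)%:R * Hk T k + (sigma ^ k.+1)%:R.
Proof.
move=> T_trie; have n_gt0 := trie_size_gt0 T_trie.
have full_le : (\sum_(c < sigma) full_breaks T k c)%:R <= (sigma ^ k.+1)%:R :> R.
  by rewrite ler_nat sum_full_breaks_le.
apply: le_trans (lerD (lexx _) full_le).
rewrite (xbwt_runs_by_context T k) /Hk mulr_sumr.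
under [X in _ <= X + _]eq_bigr do rewrite mulr_sumr.
rewrite [X in _ <= X + _]exchange_big /= !natr_sum -big_split /=; apply: ler_sum => c _.
rewrite full_breaks_by_context !natr_sum -big_split /=; apply: ler_sum => w _.
apply: runs_le_entropy_term => //.
- exact: n_ctx_c_le.
- exact: block_breaks_le_n_ctx_c.
- exact: block_breaks_le_nonout.
Qed.
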